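(* Let $R$ be an associative unital division ring over a field $F$ of characteristic $0$, let $\alpha\in R$, $q\in F\setminus\{0\}$, $\alpha_M=\alpha q^M$, and let $N\geq4$. Let $y_M\in R$ ($M\in\mathbb{Z}$) be invertible and satisfy for all $M\in\mathbb{Z}$ $$y_{M+N}=\alpha_My_{M+1}+y_{M+2}\bigl(y_M^{-1}-y_{M+N-1}^{-1}\alpha_{M-1}\bigr)y_{M+N-2}.$$ In products $\prod_{k=a}^{b}c_k:=c_ac_{a+1}\cdots c_b$ (factors ordered by increasing $k$). (a) If $N$ is even, then $u_M:=y_{M+3}y_{M+2}^{-1}$ satisfies for all $M$ $$u_{M+N-3}u_{M+N-4}-u_{M-1}u_{M-2}=\alpha_M\prod_{k=0}^{N-4}u_{M+k-1}^{-1}-\Bigl(\prod_{k=0}^{N-4}u_{M+k}^{-1}\Bigr)\alpha_{M-1}.$$ (b) If $N\geq5$ is odd and $K=\lfloor N/2\rfloor$, then $u_M:=y_{M+4}y_{M+2}^{-1}$ satisfies for all $M$ $$\prod_{k=1-K}^{0}u_{M-2k-1}-u_{M-2}\prod_{k=2-K}^{0}u_{M-2k-1}=\alpha_M-\Bigl(\prod_{k=0}^{K-2}u_{M+2k}^{-1}\Bigr)\alpha_{M-1}\prod_{k=2-K}^{0}u_{M-2k-1}.$$ *)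

From HB Require Import structures.
From mathcomp Require Import all_boot all_order all_algebra.
Set Implicit Arguments. Unset Strict Implicit. Unset Printing Implicit Defensive.
Import Order.TTheory GRing.Theory Num.Theory.
Local Open Scope ring_scope.

Definition alphaM (F : fieldType) (R : unitAlgType F) (alpha : R) (q : F)
  (M : int) : R := (q ^ M) *: alpha.

Definition iprod (R : unitRingType) (a b : int) (c : int -> R) : R :=
  if (a <= b)%R then \prod_(0 <= j < (`|(b - a + 1)%R|)%N) c (a + j%:Z) else 1.

From HB Require Import structures.
From mathcomp Require Import all_boot all_order all_algebra.
From mathcomp Require Import zify.
Import Order.TTheory GRing.Theory Num.Theory.
Local Open Scope ring_scope.

(* Multiplying the recurrence on the right by y_{M+N-2}^{-1} turns it into
     y_{M+N} y_{M+N-2}^{-1} - y_{M+2} y_M^{-1}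
       = alpha_M y_{M+1} y_{M+N-2}^{-1} - y_{M+2} y_{M+N-1}^{-1} alpha_{M-1},
   and every product of the u_M (or of their inverses) in (a) and (b)
   telescopes to one of the ratios y_i y_j^{-1} occurring here; for (b) one
   multiplies this identity on the right by y_{M+N-2} y_{M+1}^{-1}. *)

Lemma iprod_telescope {R : unitRingType} (f : int -> R) {c : int -> R} {a b : int} :
    (forall k, f k \is a GRing.unit) -> (forall k, c k = f k / f (k + 1)) ->
    a <= b + 1 -> iprod a b c = f a / f (b + 1).
Proof.
move=> Uf cE leab; rewrite /iprod; case: ifP => [leab' | /negbT ltba]; last first.
  by rewrite (_ : b + 1 = a) ?divrr //; lia.
rewrite (telescope_prodr_eq (fun j : nat => f (a + j%:Z))) //.
- by rewrite addr0; congr (_ / f _); lia.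
- by lia.
- by move=> k _; rewrite cE -addrA -[_ + 1]PoszD addn1.
Qed.

Section RatioRecurrence.

Variables (R : unitRingType) (N : int) (a y : int -> R).
Hypothesis Uy : forall M, y M \is a GRing.unit.
Hypothesis yrec : forall M,
  y (M + N) = a M * y (M + 1)
    + y (M + 2) * ((y M)^-1 - (y (M + N - 1))^-1 * a (M - 1)) * y (M + N - 2).

Lemma ratio_recurrence M :
  y (M + N) / y (M + N - 2) - y (M + 2) / y M
  = a M * (y (M + 1) / y (M + N - 2)) - y (M + 2) / y (M + N - 1) * a (M - 1).
Proof.
rewrite yrec mulrDl mulrK // mulrBr !mulrA.
by rewrite [_ - _ * a (M - 1)]addrC addrA addrK.
Qed.

Lemma ratio_mul i j k : y i / y j * (y j / y k) = y i / y k.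
Proof. by rewrite mulrA divrK. Qed.

Lemma ratio_inv i j : (y i / y j)^-1 = y j / y i.
Proof. by rewrite invrM ?unitrV // invrK. Qed.

Lemma adjacent_ratio_identity : 3 <= N ->
  let u := fun M => y (M + 3) / y (M + 2) in
  forall M,
    u (M + N - 3) * u (M + N - 4) - u (M - 1) * u (M - 2)
    = a M * iprod 0 (N - 4) (fun k => (u (M + k - 1))^-1)
      - iprod 0 (N - 4) (fun k => (u (M + k))^-1) * a (M - 1).
Proof.
move=> N3 u M.
have prod_shift1 : iprod 0 (N - 4) (fun k => (u (M + k - 1))^-1)
                   = y (M + 1) / y (M + N - 2).
  rewrite (iprod_telescope (fun k => y (M + k + 1))) //; last by lia.
  - by congr (y _ / y _); lia.
  - by move=> k; rewrite ratio_inv; congr (y _ / y _); lia.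
have prod_shift2 : iprod 0 (N - 4) (fun k => (u (M + k))^-1)
                   = y (M + 2) / y (M + N - 1).
  rewrite (iprod_telescope (fun k => y (M + k + 2))) //; last by lia.
  - by congr (y _ / y _); lia.
  - by move=> k; rewrite ratio_inv; congr (y _ / y _); lia.
have uuN : u (M + N - 3) * u (M + N - 4) = y (M + N) / y (M + N - 2).
  by rewrite /u (_ : M + N - 3 + 2 = M + N - 4 + 3) ?ratio_mul; [congr (y _ / y _)|]; lia.
have uu0 : u (M - 1) * u (M - 2) = y (M + 2) / y M.
  by rewrite /u (_ : M - 1 + 2 = M - 2 + 3) ?ratio_mul; [congr (y _ / y _)|]; lia.
by rewrite uuN uu0 prod_shift1 prod_shift2 ratio_recurrence.
Qed.

Lemma alternate_ratio_identity (K : int) : N = 2 * K + 1 -> 1 <= K ->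
  let u := fun M => y (M + 4) / y (M + 2) in
  forall M,
    iprod (1 - K) 0 (fun k => u (M - 2 * k - 1))
      - u (M - 2) * iprod (2 - K) 0 (fun k => u (M - 2 * k - 1))
    = a M - iprod 0 (K - 2) (fun k => (u (M + 2 * k))^-1) * a (M - 1)
            * iprod (2 - K) 0 (fun k => u (M - 2 * k - 1)).
Proof.
move=> NK K1 u M.
have prod_from_N : iprod (1 - K) 0 (fun k => u (M - 2 * k - 1)) = y (M + N) / y (M + 1).
  rewrite (iprod_telescope (fun k => y (M - 2 * k + 3))) //; last by lia.
  - by congr (y _ / y _); lia.
  - by move=> k; congr (y _ / y _); lia.
have prod_from_N2 : iprod (2 - K) 0 (fun k => u (M - 2 * k - 1))
                    = y (M + N - 2) / y (M + 1).
  rewrite (iprod_telescope (fun k => y (M - 2 * k + 3))) //; last by lia.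
  - by congr (y _ / y _); lia.
  - by move=> k; congr (y _ / y _); lia.
have prod_inv : iprod 0 (K - 2) (fun k => (u (M + 2 * k))^-1) = y (M + 2) / y (M + N - 1).
  rewrite (iprod_telescope (fun k => y (M + 2 * k + 2))) //; last by lia.
  - by congr (y _ / y _); lia.
  - by move=> k; rewrite ratio_inv; congr (y _ / y _); lia.
have u2 : u (M - 2) = y (M + 2) / y M by rewrite /u; congr (y _ / y _); lia.
rewrite prod_from_N prod_from_N2 prod_inv u2.
have := congr1 (fun t => t * (y (M + N - 2) / y (M + 1))) (ratio_recurrence M).
by rewrite /= !mulrBl ratio_mul -[a M * _ * _]mulrA ratio_mul divrr // mulr1.
Qed.

End RatioRecurrence.

Theorem proposition6p8 (F : fieldType) (R : unitAlgType F)
  (hchar : [pchar F] =i pred0)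
  (hdiv : forall x : R, x != 0 -> x \is a GRing.unit)
  (alpha : R) (q : F) (hq : q != 0) (N : nat) (hN : (4 <= N)%N)
  (y : int -> R) (hy : forall M : int, y M \is a GRing.unit)
  (hrec : forall M : int,
     y (M + N%:Z) = alphaM alpha q M * y (M + 1)
       + y (M + 2) * ((y M)^-1 - (y (M + N%:Z - 1))^-1 * alphaM alpha q (M - 1))
         * y (M + N%:Z - 2)) :
  (~~ odd N ->
     let u := fun M : int => y (M + 3) * (y (M + 2))^-1 in
     forall M : int,
       u (M + N%:Z - 3) * u (M + N%:Z - 4) - u (M - 1) * u (M - 2)
       = alphaM alpha q M * iprod 0 (N%:Z - 4) (fun k => (u (M + k - 1))^-1)
         - iprod 0 (N%:Z - 4) (fun k => (u (M + k))^-1) * alphaM alpha q (M - 1))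
  /\
  ((5 <= N)%N -> odd N ->
     let K : int := (N./2)%:Z in
     let u := fun M : int => y (M + 4) * (y (M + 2))^-1 in
     forall M : int,
       iprod (1 - K) 0 (fun k => u (M - 2 * k - 1))
         - u (M - 2) * iprod (2 - K) 0 (fun k => u (M - 2 * k - 1))
       = alphaM alpha q M
         - iprod 0 (K - 2) (fun k => (u (M + 2 * k))^-1) * alphaM alpha q (M - 1)
           * iprod (2 - K) 0 (fun k => u (M - 2 * k - 1))).
Proof.
split=> [_ | N5 oddN].
  by apply: adjacent_ratio_identity => //; lia.
apply: alternate_ratio_identity => //; last by lia.
by rewrite -[in LHS](odd_double_half N) oddN -muln2; lia.
Qed.
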